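(* Let $\mathcal{M}=(\mathbf{x},\mathbf{p})$ be an auction format, let $\boldsymbol{\pi}^{(1)},\dots,\boldsymbol{\pi}^{(n)}\in\Delta([K+1])$ be quantile strategies, let $s_i:=s_{i,\boldsymbol{\pi}^{(i)}}$, and let $\tilde{\mathcal{M}}=(\tilde{\mathbf{x}},\tilde{\mathbf{p}})$ be the auxiliary auction defined by $\tilde{\mathbf{x}}(\mathbf{v}):=\mathbf{x}(s_1(v_1),\dots,s_n(v_n))$ and $\tilde p_i(\mathbf{v}):=\tilde x_i(v_i,\mathbf{v}_{-i})v_i-\int_0^{v_i}\tilde x_i(z,\mathbf{v}_{-i})dz$. Then, writing $\Pi^{(i)}_j:=\sum_{\ell\le j}\pi^{(i)}_\ell$ and $\mathbf{b}_{-i}:=(s_\ell(v_\ell))_{\ell\ne i}$, \[ \mathbb{E}_{\mathbf{v}\sim\mathcal{D}}\Big[\sum_{i\in[n]}\tilde p_i(\mathbf{v})\Big]=\sum_{i\in[n]}\mathbb{E}_{\mathbf{v}_{-i}}\Big[\sum_{j=1}^{K}\sum_{k=j+1}^{K+1}\pi^{(i)}_k\Big(x_i\big(\tfrac{j}{K},\mathbf{b}_{-i}\big)-x_i\big(\tfrac{j-1}{K},\mathbf{b}_{-i}\big)\Big)F_i^{-1}\big(\Pi^{(i)}_j\big)\Big]. \]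
   Context: Each bidder $i\in[n]$ has value $v_i$ drawn independently from a continuous distribution $\mathcal{D}_i$ on $[0,1]$ with CDF $F_i$ and quantile function $F_i^{-1}(y):=\inf\{v\in[0,1]:F_i(v)\ge y\}$; $\mathcal{D}:=\mathcal{D}_1\times\cdots\times\mathcal{D}_n$. Bid set $B:=\{j/K:j=0,\dots,K\}$. An auction format is $(\mathbf{x},\mathbf{p})$, $\mathbf{x}:B^n\to\Delta([n])$ (nonnegative entries summing to at most 1), $\mathbf{p}:B^n\to[0,1]^n$. For a quantile strategy $\boldsymbol{\pi}\in\Delta([K+1])$ (probability simplex), with $\Pi_0:=0$, $\Pi_j:=\sum_{\ell\le j}\pi_\ell$, the strategy $s_{i,\boldsymbol{\pi}}$ bids $0$ on $[0,F_i^{-1}(\Pi_1)]$ and $\frac{j-1}{K}$ on $(F_i^{-1}(\Pi_{j-1}),F_i^{-1}(\Pi_j)]$ for $j=2,\dots,K+1$. *)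

From HB Require Import structures.
From mathcomp Require Import all_boot all_order all_algebra.
From mathcomp Require Import all_classical all_reals all_analysis.
Set Implicit Arguments. Unset Strict Implicit. Unset Printing Implicit Defensive.
Import Order.TTheory GRing.Theory Num.Theory numFieldNormedType.Exports.
Local Open Scope classical_set_scope.
Local Open Scope ring_scope.

(* Bids are represented by their index j : 'I_K.+1, standing for the bid j/K. *)

Definition cdfF (R : realType) (mu : probability R R) (v : R) : R :=
  fine (mu `]-oo, v]%classic).

Definition qf (R : realType) (mu : probability R R) (y : R) : R :=
  inf [set v : R | 0 <= v <= 1 /\ y <= cdfF mu v].

(* Pi_j = sum_{l <= j} pi_l in the paper's 1-based indexing;
   pi is stored 0-based: paper pi_l = pi (l-1). *)
Definition Pi (R : realType) (K : nat) (pi : 'I_K.+1 -> R) (j : nat) : R :=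
  \sum_(l < K.+1 | (l < j)%N) pi l.

(* Quantile strategy s_{i,pi}: bids index 0 on (-oo, F^{-1}(Pi_1)] and index l
   (i.e. bid l/K) on (F^{-1}(Pi_l), F^{-1}(Pi_{l+1})], l = 1..K. *)
Definition qbid (R : realType) (K : nat) (pi : 'I_K.+1 -> R) (Finv : R -> R)
  (v : R) : 'I_K.+1 :=
  inord (\max_(l < K.+1 | (l == 0%N :> nat) || (Finv (Pi pi l) < v)) (l : nat)).

Definition updv (R : realType) (n : nat) (v : 'I_n -> R) (i : 'I_n) (z : R)
  : 'I_n -> R := fun l => if l == i then z else v l.

Definition bprofile (R : realType) (n K : nat) (s : 'I_n -> R -> 'I_K.+1)
  (v : 'I_n -> R) : {ffun 'I_n -> 'I_K.+1} := [ffun l => s l (v l)].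

Definition bprofile_i (R : realType) (n K : nat) (s : 'I_n -> R -> 'I_K.+1)
  (v : 'I_n -> R) (i : 'I_n) (j : 'I_K.+1) : {ffun 'I_n -> 'I_K.+1} :=
  [ffun l => if l == i then j else s l (v l)].

Definition xtilde (R : realType) (n K : nat)
  (x : {ffun 'I_n -> 'I_K.+1} -> 'I_n -> R) (s : 'I_n -> R -> 'I_K.+1)
  (v : 'I_n -> R) (i : 'I_n) : R := x (bprofile s v) i.

Definition ptilde (R : realType) (n K : nat)
  (x : {ffun 'I_n -> 'I_K.+1} -> 'I_n -> R) (s : 'I_n -> R -> 'I_K.+1)
  (v : 'I_n -> R) (i : 'I_n) : R :=
  xtilde x s v i * v i
  - Rintegral lebesgue_measure `[0, v i]%classic
      (fun z => xtilde x s (updv v i z) i).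

(* Iterated integration of f against D_k for every coordinate k < m with S k
   (coordinates not in S keep their value from v). *)
Fixpoint iterE (R : realType) (n : nat) (D : 'I_n -> probability R R)
  (S : pred 'I_n) (m : nat) (f : ('I_n -> R) -> \bar R) (v : 'I_n -> R)
  : \bar R :=
  match m with
  | 0 => f v
  | m'.+1 =>
    match (insub m' : option 'I_n) with
    | Some k => if S k then
                  (\int[D k]_z iterE D S m' f (updv v k z))%E
                else iterE D S m' f v
    | None => iterE D S m' f v
    end
  end.

(* E_{v ~ D}[f(v)] for D = D_1 x ... x D_n (as an iterated integral). *)
Definition Eprod (R : realType) (n : nat) (D : 'I_n -> probability R R)
  (f : ('I_n -> R) -> \bar R) : \bar R :=
  iterE D predT n f (fun _ => 0).

(* E_{v_{-i}}[f(v)] for f not depending on v_i. *)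
Definition Eminus (R : realType) (n : nat) (D : 'I_n -> probability R R)
  (i : 'I_n) (f : ('I_n -> R) -> \bar R) : \bar R :=
  iterE D (predC1 i) n f (fun _ => 0).

Set Warnings "-notation-overridden,-ambiguous-paths,-notation-incompatible-prefix,-deprecated".
From HB Require Import structures.
From mathcomp Require Import all_boot all_order all_algebra.
From mathcomp Require Import all_classical all_reals all_analysis.
From mathcomp Require Import ring lra measurable_realfun.
Import Order.TTheory GRing.Theory Num.Theory numFieldNormedType.Exports.
Local Open Scope classical_set_scope.
Local Open Scope ring_scope.
Set Implicit Arguments. Unset Strict Implicit. Unset Printing Implicit Defensive.

(* Fix bidder i and the bids b_{-i} of the others.  The quantile strategy bids
   j/K exactly when v_i exceeds the threshold q_j = F_i^{-1}(Pi_j), so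
   v_i |-> x~_i is a step function jumping by x_i(j, b_{-i}) - x_i(j-1, b_{-i})
   at q_j, and the payment x~_i(v_i) v_i - int_0^{v_i} x~_i is the sum of these
   jumps times q_j over the thresholds q_j < v_i.  Since F_i is continuous,
   F_i(q_j) = Pi_j, hence P(v_i > q_j) = 1 - Pi_j = sum_{k > j} pi_k, which
   gives the expected payment of bidder i for fixed b_{-i}.
   To integrate over the other coordinates, both integrands are written as
   finite sums, over bidders i and bid profiles b, of products of one-variable
   functions: for k <> i, v_k only enters through the indicator
   [s_k(v_k) = b_k].  An iterated integral of such a product is the product of
   the one-dimensional integrals, and the two sides agree term by term. *)

Section finite_linear_combination.
Context d (T : measurableType d) (R : realType) (mu : {measure set T -> \bar R}).

Lemma integrableZl_EFin (D : set T) (k : R) (f : T -> R) : measurable D ->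
  mu.-integrable D (EFin \o f) -> mu.-integrable D (EFin \o fun z => k * f z).
Proof.
move=> mD f_int; apply: (eq_integrable mD (fun z => k%:E * (EFin \o f) z)%E).
  by move=> z _; rewrite /= EFinM.
exact: integrableZl.
Qed.

Lemma integrable_sumZl (D : set T) (I : Type) (r : seq I) (P : pred I)
    (c : I -> R) (f : I -> T -> R) :
  measurable D -> (forall t, mu.-integrable D (EFin \o f t)) ->
  mu.-integrable D (EFin \o fun z => \sum_(t <- r | P t) c t * f t z).
Proof.
move=> mD f_int; apply: (eq_integrable mD
  (fun z => \sum_(t <- r | P t) (EFin \o fun z => (c t * f t z)%R) z)%E).
  by move=> z _; rewrite /= sumEFin.
by apply: (integrable_sum mD) => t _; exact: integrableZl_EFin.
Qed.

Lemma integral_sumZl (D : set T) (I : Type) (r : seq I) (P : pred I)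
    (c : I -> R) (f : I -> T -> R) :
  measurable D -> (forall t, mu.-integrable D (EFin \o f t)) ->
  (\int[mu]_(z in D) (\sum_(t <- r | P t) c t * f t z)%:E
   = (\sum_(t <- r | P t) c t * Rintegral mu D (f t))%:E)%E.
Proof.
move=> mD f_int; under eq_integral do rewrite -sumEFin.
rewrite integral_sum //; last by move=> t; exact: integrableZl_EFin.
rewrite -sumEFin; apply: eq_bigr => t _.
rewrite -RintegralZl // /Rintegral fineK //.
exact: integrable_fin_num (integrableZl_EFin _ mD (f_int t)).
Qed.

End finite_linear_combination.

Section bool_indicator.
Context d (T : measurableType d) (R : realType) (mu : {measure set T -> \bar R}).
Variables (D : set T) (P : T -> bool).
Hypotheses (mD : measurable D) (muD_fin : (mu D < +oo)%E) (mP : measurable [set z | P z]).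

Let bool_indicE : (fun z => (P z)%:R) = \1_[set z | P z] :> (T -> R).
Proof.
apply: funext => z; rewrite indicE.
by case: (boolP (P z)) => Pz; [rewrite mem_set | rewrite memNset //=; apply/negP].
Qed.

Lemma integrable_bool_indic : mu.-integrable D (EFin \o fun z => (P z)%:R).
Proof.
rewrite bool_indicE; apply: measurable_bounded_integrable => //.
exists 1; split; first exact: num_real.
move=> M M_gt1 z _; apply: le_trans (ltW M_gt1).
by rewrite indicE; case: (_ \in _); rewrite ?normr1 ?normr0.
Qed.

Lemma Rintegral_bool_indic :
  Rintegral mu D (fun z => (P z)%:R) = fine (mu ([set z | P z] `&` D)).
Proof. by rewrite bool_indicE /Rintegral integral_indic. Qed.

End bool_indicator.

Section iterated_integral.
Context (R : realType) (n : nat) (D : 'I_n -> probability R R).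

Lemma iterE_sum_prod (S : pred 'I_n) (T : finType) (Q : pred T)
    (phi : T -> 'I_n -> R -> R) m v :
  (forall t k, S k -> (D k).-integrable setT (EFin \o phi t k)) ->
  iterE D S m (fun w => (\sum_(t | Q t) \prod_(k < n) phi t k (w k))%:E) v =
  (\sum_(t | Q t) \prod_(k < n)
     (if (k < m)%N && S k then Rintegral (D k) setT (phi t k)
      else phi t k (v k)))%:E.
Proof.
move=> phi_int; elim: m v => [|m IH] v //=.
case: insubP => [k0 _ k0m|]; last first.
  rewrite -leqNgt => nm; rewrite IH; congr EFin; apply: eq_bigr => t _.
  apply: eq_bigr => k _.
  by rewrite (leq_trans (ltn_ord k) nm) (leq_trans (ltn_ord k) (leqW nm)).
subst m.
have ltnS_neq k : k != k0 -> (k < k0.+1)%N = (k < k0)%N.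
  move=> kk0; rewrite ltnS leq_eqVlt.
  by case: eqP => // /val_inj ek; rewrite ek eqxx in kk0.
case Sk0: (S k0); last first.
  rewrite IH; congr EFin; apply: eq_bigr => t _; apply: eq_bigr => k _.
  by case: (eqVneq k k0) => [->|/ltnS_neq ->]; rewrite ?Sk0 ?andbF.
under eq_integral do rewrite IH.
pose A t := \prod_(k < n | k != k0)
  (if (k < k0.+1)%N && S k then Rintegral (D k) setT (phi t k) else phi t k (v k)).
rewrite (eq_integral (fun z => (\sum_(t | Q t) A t * phi t k0 z)%:E)); last first.
  move=> z _; congr EFin; apply: eq_bigr => t _.
  rewrite (bigD1 k0) //= ltnn /= /updv eqxx mulrC; congr (_ * _).
  by apply: eq_bigr => k kk0; rewrite (negbTE kk0) ltnS_neq.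
rewrite integral_sumZl //; last by move=> t; exact: phi_int.
congr EFin; apply: eq_bigr => t Qt.
by rewrite (bigD1 k0) //= ltnSn Sk0 /= mulrC.
Qed.

End iterated_integral.

Lemma near_norm_lt (R : numFieldType) (a : R) (P : R -> Prop) :
  (\forall t \near a, P t) -> exists2 e : R, 0 < e & forall t, `|a - t| < e -> P t.
Proof. by move=> /nbhs_ballP[e /= e0 aeP]; exists e => // t; apply: aeP. Qed.

Section cdf_quantile.
Context (R : realType) (mu : probability R R).
Hypotheses (mu01 : mu `[0, 1]%classic = 1%E) (cdf_cont : continuous (cdfF mu)).

Lemma cdfF_ge0 v : 0 <= cdfF mu v.
Proof. by rewrite /cdfF fine_ge0. Qed.

Lemma prob_lt0 : mu `]-oo, 0[%classic = 0%E.
Proof.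
apply/eqP; rewrite eq_le measure_ge0 andbT.
have <- : mu (~` `[0, 1]%classic) = 0%E by rewrite probability_setC // mu01 subee.
rewrite le_measure ?inE //; first exact: measurableC.
by move=> z /=; rewrite !in_itv /= => z0 /andP[/(lt_le_trans z0)]; rewrite ltxx.
Qed.

Let min0_patch :
  (EFin \o fun z : R => Num.min z 0) = (EFin \o idfun) \_ `]-oo, 0[%classic.
Proof.
apply: funext => z; rewrite patchE /=.
case: (ltP z 0) => z0; first by rewrite mem_set /= ?in_itv //= min_l // ltW.
by rewrite memNset //= in_itv /= ltNge z0.
Qed.

Lemma integrable_min0 : mu.-integrable setT (EFin \o fun z : R => Num.min z 0).
Proof.
rewrite min0_patch -integrable_mkcond //.
apply: null_set_integrable => //; last exact: prob_lt0.
exact/measurable_EFinP/measurable_id.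
Qed.

Lemma Rintegral_min0 : Rintegral mu setT (fun z : R => Num.min z 0) = 0.
Proof.
rewrite /Rintegral (_ : (fun z => _) = EFin \o fun z : R => Num.min z 0) //.
rewrite min0_patch -integral_mkcond.
rewrite null_set_integral //; last exact: prob_lt0.
exact/measurable_EFinP/measurable_id.
Qed.

Lemma cdfF_lt0 v : v < 0 -> cdfF mu v = 0.
Proof.
move=> v0; apply/eqP; rewrite eq_le cdfF_ge0 andbT /cdfF.
rewrite -lee_fin fineK ?fin_num_measure //.
have -> : 0%:E = mu `]-oo, 0[%classic by rewrite prob_lt0.
rewrite le_measure ?inE //.
by move=> z /=; rewrite !in_itv /= => /le_lt_trans; apply.
Qed.

Lemma cdfF1 : cdfF mu 1 = 1.
Proof.
apply/eqP; rewrite eq_le /cdfF -!lee_fin fineK ?fin_num_measure //.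
rewrite probability_le1 // -mu01 le_measure ?inE //.
by move=> z /=; rewrite !in_itv /= => /andP[].
Qed.

Lemma cdfF0 : cdfF mu 0 = 0.
Proof.
apply/eqP; rewrite eq_le cdfF_ge0 andbT leNgt; apply/negP => cdf0_gt0.
have half_lt : cdfF mu 0 / 2 < cdfF mu 0 by rewrite ltr_pdivrMr // ltr_pMr // ltr1n.
have [e e0 near0] := near_norm_lt (cvgr_gt _ (@cdf_cont 0) _ half_lt).
have e2_gt0 : 0 < e / 2 by rewrite divr_gt0.
have e2_lt : `|0 - - (e / 2)| < e by rewrite sub0r opprK gtr0_norm // ltr_pdivrMr // ltr_pMr // ltr1n.
move: (near0 _ e2_lt); rewrite (@cdfF_lt0 (- (e / 2))) ?oppr_lt0 //.
by rewrite ltNge divr_ge0 ?cdfF_ge0.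
Qed.

Let Sq (y : R) := [set v : R | 0 <= v <= 1 /\ y <= cdfF mu v].

Let Sq1 y : y <= 1 -> Sq y 1.
Proof. by move=> y1; split; [rewrite lexx ler01 | rewrite cdfF1]. Qed.

Let Sq_lb y : lbound (Sq y) 0.
Proof. by move=> v [/andP[]]. Qed.

Let Sq_ne y : y <= 1 -> nonempty (Sq y).
Proof. by move=> y1; exists 1; exact: Sq1. Qed.

Let Sq_hlb y : has_lbound (Sq y).
Proof. by exists 0; exact: Sq_lb. Qed.

Lemma qf_ge0 y : y <= 1 -> 0 <= qf mu y.
Proof. by move=> y1; apply: lb_le_inf (Sq_ne y1) (@Sq_lb y). Qed.

Lemma qf_le1 y : y <= 1 -> qf mu y <= 1.
Proof. by move=> y1; apply: (ge_inf (@Sq_hlb y)); exact: Sq1. Qed.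

Lemma le_qf y1 y2 : y1 <= y2 -> y2 <= 1 -> qf mu y1 <= qf mu y2.
Proof.
move=> y12 y21; apply: lb_le_inf (Sq_ne y21) _ => v [v01 y2v].
by apply: (ge_inf (@Sq_hlb y1)); split => //; exact: le_trans y2v.
Qed.

Lemma qfK y : 0 <= y <= 1 -> cdfF mu (qf mu y) = y.
Proof.
move=> /andP[y0 y1]; have q0 := qf_ge0 y1; have q1 := qf_le1 y1.
apply/eqP; rewrite eq_le; apply/andP; split; rewrite leNgt; apply/negP => ltq.
- have [e e0 near_q] := near_norm_lt (cvgr_gt _ (@cdf_cont (qf mu y)) _ ltq).
  have q_gt0 : 0 < qf mu y.
    by rewrite lt_neqAle q0 andbT; apply: contraTneq ltq => <-; rewrite cdfF0 -leNgt.
  pose h := Num.min e (qf mu y) / 2.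
  have h_gt0 : 0 < h by rewrite divr_gt0 // lt_min e0.
  have h_lt : h < Num.min e (qf mu y) by rewrite ltr_pdivrMr // ltr_pMr ?ltr1n // lt_min e0.
  have [he hq] : h < e /\ h < qf mu y by move: h_lt; rewrite lt_min => /andP[].
  have : Sq y (qf mu y - h).
    split; first by apply/andP; split; lra.
    by apply/ltW/near_q; rewrite opprB addrC subrK gtr0_norm.
  by move/(ge_inf (@Sq_hlb y)); rewrite -/(qf mu y); lra.
- have [e e0 near_q] := near_norm_lt (cvgr_lt _ (@cdf_cont (qf mu y)) _ ltq).
  have [v Sv v_lt] := inf_adherent e0 (conj (Sq_ne y1) (@Sq_hlb y)).
  have qv := ge_inf (@Sq_hlb y) Sv.
  case: Sv => _; apply/negP; rewrite -ltNge; apply: near_q.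
  by rewrite distrC ger0_norm ?subr_ge0 // ltrBlDl.
Qed.

Lemma prob_gt_qf y : 0 <= y <= 1 -> fine (mu `]qf mu y, +oo[%classic) = 1 - y.
Proof.
move=> y01; rewrite -[in RHS](qfK y01) -(setCitvl (BRight (qf mu y))).
by rewrite probability_setC // fineB ?fin_num_measure.
Qed.

End cdf_quantile.

Section cumulative_sum.
Context (R : realType) (K : nat) (pi : 'I_K.+1 -> R).
Hypotheses (pi_ge0 : forall l, 0 <= pi l) (pi_sum1 : \sum_(l < K.+1) pi l = 1).

Lemma Pi_ge0 j : 0 <= Pi pi j.
Proof. by rewrite /Pi sumr_ge0. Qed.

Lemma subr1_Pi (j : nat) : 1 - Pi pi j = \sum_(l < K.+1 | (j <= l)%N) pi l.
Proof.
rewrite -pi_sum1 (bigID (fun l : 'I_K.+1 => (l < j)%N)) /= /Pi addrC addrK.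
by apply: eq_bigl => l; rewrite -leqNgt.
Qed.

Lemma Pi_le1 j : Pi pi j <= 1.
Proof. by rewrite -subr_ge0 subr1_Pi sumr_ge0. Qed.

Lemma le_Pi j1 j2 : (j1 <= j2)%N -> Pi pi j1 <= Pi pi j2.
Proof.
move=> j12; rewrite /Pi [leRHS](bigID (fun l : 'I_K.+1 => (l < j1)%N)) /=.
rewrite -[leLHS]addr0 lerD ?sumr_ge0 // le_eqVlt; apply/orP; left; apply/eqP/eq_bigl => l.
by case: (ltnP l j1) => [lj1|]; rewrite ?andbF // (leq_trans lj1 j12).
Qed.

End cumulative_sum.

Section quantile_bid.
Context (R : realType) (K : nat) (pi : 'I_K.+1 -> R) (Finv : R -> R).
Hypotheses (pi_ge0 : forall l, 0 <= pi l) (pi_sum1 : \sum_(l < K.+1) pi l = 1)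
  (le_Finv : forall y1 y2, y1 <= y2 -> y2 <= 1 -> Finv y1 <= Finv y2).

Lemma qbid_ge (j : nat) v : (0 < j)%N -> (j <= K)%N ->
  (j <= qbid pi Finv v)%N = (Finv (Pi pi j) < v).
Proof.
move=> j0 jK; rewrite /qbid.
set M := (\max_(l < K.+1 | _) _)%N.
have MK : (M <= K)%N by apply/bigmax_leqP => l _; rewrite -ltnS ltn_ord.
rewrite inordK ?ltnS //; apply/idP/idP => [|thr_v]; last first.
  have jK1 : (j < K.+1)%N by rewrite ltnS.
  apply: (leq_bigmax_cond (Ordinal jK1) (F := fun l : 'I_K.+1 => (l : nat))).
  by rewrite /= thr_v orbT.
apply: contraLR; rewrite -leNgt -ltnNge => v_le.
rewrite -(prednK j0) ltnS; apply/bigmax_leqP => l /orP[/eqP -> //|thr_l].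
rewrite -ltnS (prednK j0) ltnNge; apply/negP => jl.
have := le_Finv (le_Pi pi_ge0 jl) (Pi_le1 pi_ge0 pi_sum1 l).
by move/le_lt_trans/(_ thr_l); rewrite ltNge v_le.
Qed.

End quantile_bid.

Lemma set_gt_itv (R : realType) (a : R) : [set z : R | a < z] = `]a, +oo[%classic.
Proof. by apply/seteqP; split => z; rewrite /= in_itv /= andbT. Qed.

Lemma measurable_gt (R : realType) (a : R) : measurable [set z : R | a < z].
Proof. by rewrite set_gt_itv. Qed.

Section step_allocation.
Context (R : realType) (K : nat) (s : R -> 'I_K.+1) (q : nat -> R).
Hypotheses (s_ge : forall (j : nat) z, (0 < j)%N -> (j <= K)%N -> (j <= s z)%N = (q j < z))
  (q_ge0 : forall j, 0 <= q j).

Let measurable_step_ge (j : nat) : measurable [set z | (j <= s z)%N].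
Proof.
case: (posnP j) => [->|j0]; first by rewrite (_ : [set _ | _] = setT) //; apply/seteqP.
case: (leqP j K) => jK.
  rewrite (_ : [set _ | _] = `]q j, +oo[%classic) //.
  by apply/seteqP; split => z; rewrite /= in_itv /= andbT s_ge.
rewrite (_ : [set _ | _] = set0) //; apply/seteqP; split => z //=.
by move/leq_trans/(_ (leq_ord (s z))); rewrite leqNgt jK.
Qed.

Lemma measurable_step_eq (b : 'I_K.+1) : measurable [set z | s z == b].
Proof.
rewrite (_ : [set _ | _] = [set z | (b <= s z)%N] `\` [set z | (b.+1 <= s z)%N]).
  exact: measurableD.
apply/seteqP; split => z /=; first by move/eqP ->; rewrite leqnn ltnn.
by move=> [bs /negP]; rewrite -leqNgt => sb; apply/eqP/val_inj/eqP; rewrite eqn_leq sb.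
Qed.

Variable X : 'I_K.+1 -> R.

Let dX (j : 'I_K.+1) := X j - X (inord j.-1).

Lemma X_inordE (m : nat) : (m <= K)%N ->
  X (inord m) = X ord0 + \sum_(j < K.+1 | (0 < j)%N) dX j * (j <= m)%N%:R.
Proof.
elim: m => [_|m IH mK].
  rewrite big1 ?addr0; last by move=> j j0; rewrite leqNgt j0 mulr0.
  by congr X; apply/val_inj; rewrite /= inordK.
have mK1 : (m.+1 < K.+1)%N by rewrite ltnS.
have m1_neq j : j != inord m.+1 :> 'I_K.+1 -> (j <= m.+1)%N = (j <= m)%N.
  move=> jm; rewrite leq_eqVlt ltnS; case: eqP => // jm1.
  by rewrite -jm1 inord_val eqxx in jm.
rewrite (bigD1 (inord m.+1)) /= ?inordK // leqnn mulr1.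
under eq_bigr => j /andP[_ jm] do rewrite m1_neq //.
have := IH (ltnW mK); rewrite (bigD1 (inord m.+1)) /= ?inordK // ltnn mulr0 add0r.
by move=> IHm; rewrite addrCA -IHm /dX inordK //= subrK.
Qed.

Lemma X_stepE w :
  X (s w) = X ord0 + \sum_(j < K.+1 | (0 < j)%N) dX j * (q j < w)%R%:R.
Proof.
rewrite -[s w]inord_val X_inordE ?leq_ord //; congr (_ + _).
by apply: eq_bigr => j j0; rewrite s_ge ?leq_ord.
Qed.

Definition pay (z : R) :=
  X (s z) * z - Rintegral lebesgue_measure `[0, z]%classic (fun w => X (s w)).

Let lebesgue_itv0 (z : R) : 0 <= z -> lebesgue_measure `[0, z]%classic = z%:E.
Proof.
move=> z0; rewrite lebesgue_measure_itv /= lte_fin.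
by case: ltP => [_|zle0]; [rewrite oppr0 adde0 | apply/esym/congr1/eqP; rewrite eq_le z0 zle0].
Qed.

Let lebesgue_itv0_fin (z : R) : 0 <= z -> (lebesgue_measure `[0%R, z]%classic < +oo)%E.
Proof. by move=> z0; rewrite lebesgue_itv0 ?ltry. Qed.

Let integrable_gt_itv0 (z a : R) : 0 <= z ->
  lebesgue_measure.-integrable `[0, z]%classic (EFin \o fun w => (a < w)%R%:R).
Proof.
move=> z0; exact: (@integrable_bool_indic _ _ _ lebesgue_measure _ (fun w => a < w)
  (measurable_itv _) (lebesgue_itv0_fin z0) (measurable_gt a)).
Qed.

Let Rintegral_gt_itv0 (z : R) j : 0 <= z ->
  Rintegral lebesgue_measure `[0, z]%classic (fun w => (q j < w)%R%:R)
  = Num.max (z - q j) 0.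
Proof.
move=> z0; rewrite (@Rintegral_bool_indic _ _ _ lebesgue_measure _ (fun w => q j < w)
  (measurable_itv _) (measurable_gt _)).
rewrite (_ : _ `&` _ = `]q j, z]%classic); last first.
  apply/seteqP; split => w /=; rewrite !in_itv /= ?andbT.
    by move=> [qw /andP[_ wz]]; rewrite qw wz.
  by move=> /andP[qw wz]; rewrite wz andbT (le_trans (q_ge0 j)) // ltW.
have itv_len : lebesgue_measure `]q j, z]%classic = (Num.max (z - q j) 0)%:E.
  rewrite lebesgue_measure_itv /= lte_fin.
  case: ltP => qz; first by rewrite (max_idPl _) // subr_ge0 ltW.
  by rewrite (max_idPr _) // subr_le0.
exact: (congr1 fine itv_len).
Qed.

Lemma Rintegral_step_itv0 (z : R) : 0 <= z ->
  Rintegral lebesgue_measure `[0, z]%classic (fun w => X (s w))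
  = X ord0 * z + \sum_(j < K.+1 | (0 < j)%N) dX j * Num.max (z - q j) 0.
Proof.
move=> z0; rewrite (funext X_stepE).
have cst_int : lebesgue_measure.-integrable `[0, z]%classic (EFin \o cst (X ord0)).
  apply: measurable_bounded_integrable => //; first exact: lebesgue_itv0_fin.
  by exists `|X ord0|; split; [exact: num_real | move=> M XM w _; exact: ltW].
rewrite RintegralD //; last by apply: integrable_sumZl => // j; exact: integrable_gt_itv0.
rewrite Rintegral_cst //; congr (_ * _ + _); first exact: (congr1 fine (lebesgue_itv0 z0)).
rewrite /Rintegral integral_sumZl //=; last by move=> j; exact: integrable_gt_itv0.
by apply: eq_bigr => j _; rewrite Rintegral_gt_itv0.
Qed.

Lemma payE z :
  pay z = \sum_(j < K.+1 | (0 < j)%N) dX j * q j * (q j < z)%R%:R + X ord0 * Num.min z 0.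
Proof.
case: (ltP z 0) => z0.
  have s0 : s z = ord0.
    apply/val_inj/eqP; rewrite /= -leqn0 leqNgt; apply/negP => sz_gt0.
    move: (s_ge z sz_gt0 (leq_ord _)); rewrite leqnn => /esym.
    by rewrite ltNge (le_trans (ltW z0) (q_ge0 _)).
  rewrite /pay s0 set_itv_ge ?bnd_simp -?ltNge // Rintegral_set0 subr0.
  rewrite big1 ?add0r // => j _.
  by rewrite ltNge (le_trans (ltW z0) (q_ge0 _)) mulr0.
rewrite /pay Rintegral_step_itv0 // {1}X_stepE mulr0 addr0.
rewrite mulrDl opprD addrACA subrr add0r big_distrl -sumrB /=.
apply: eq_bigr => j _; case: ltP => qz /=.
  by rewrite (max_idPl _) ?subr_ge0 ?ltW //; ring.
by rewrite (max_idPr _) ?subr_le0 //; ring.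
Qed.

End step_allocation.

Section expected_step_payment.
Context (R : realType) (mu : probability R R) (K : nat) (s : R -> 'I_K.+1) (q : nat -> R).
Hypotheses (mu01 : mu `[0, 1]%classic = 1%E)
  (s_ge : forall (j : nat) z, (0 < j)%N -> (j <= K)%N -> (j <= s z)%N = (q j < z))
  (q_ge0 : forall j, 0 <= q j).
Variable X : 'I_K.+1 -> R.

Let integrable_gt (a : R) : mu.-integrable setT (EFin \o fun z => (a < z)%R%:R).
Proof.
apply: integrable_bool_indic => //; last exact: measurable_gt.
by rewrite ltey_eq fin_num_measure.
Qed.

Lemma integrable_pay : mu.-integrable setT (EFin \o pay s X).
Proof.
rewrite (funext (payE s_ge q_ge0 X)).
apply: (eq_integrable measurableT
  ((EFin \o fun z => \sum_(j < K.+1 | (0 < j)%N) (X j - X (inord j.-1)) * q j * (q j < z)%R%:R)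
   \+ (EFin \o fun z => X ord0 * Num.min z 0))).
  by move=> z _; rewrite /= EFinD.
apply: integrableD => //; first exact: integrable_sumZl.
exact/integrableZl_EFin/integrable_min0.
Qed.

Lemma Rintegral_pay : Rintegral mu setT (pay s X)
  = \sum_(j < K.+1 | (0 < j)%N)
      (X j - X (inord j.-1)) * q j * fine (mu `]q j, +oo[%classic).
Proof.
rewrite (funext (payE s_ge q_ge0 X)) RintegralD //; first last.
- exact/integrableZl_EFin/integrable_min0.
- exact: integrable_sumZl.
rewrite RintegralZl //; last exact: integrable_min0.
rewrite Rintegral_min0 // mulr0 addr0 /Rintegral integral_sumZl //=.
apply: eq_bigr => j _; rewrite Rintegral_bool_indic //; last exact: measurable_gt.
by rewrite setIT set_gt_itv.
Qed.

End expected_step_payment.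

Section quantile_payment.
Context (R : realType) (mu : probability R R) (K : nat) (pi : 'I_K.+1 -> R).
Hypotheses (mu01 : mu `[0, 1]%classic = 1%E) (cdf_cont : continuous (cdfF mu))
  (pi_ge0 : forall l, 0 <= pi l) (pi_sum1 : \sum_(l < K.+1) pi l = 1).
Variable X : 'I_K.+1 -> R.

Let qbid_ge_qf (j : nat) z : (0 < j)%N -> (j <= K)%N ->
  (j <= qbid pi (qf mu) z)%N = (qf mu (Pi pi j) < z).
Proof. exact/qbid_ge/le_qf. Qed.

Let qf_Pi_ge0 (j : nat) : 0 <= qf mu (Pi pi j).
Proof. exact/qf_ge0/Pi_le1. Qed.

Lemma measurable_qbid_eq (b : 'I_K.+1) : measurable [set z | qbid pi (qf mu) z == b].
Proof. exact: measurable_step_eq qbid_ge_qf b. Qed.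

Lemma integrable_qbid_pay : mu.-integrable setT (EFin \o pay (qbid pi (qf mu)) X).
Proof. exact: integrable_pay qbid_ge_qf qf_Pi_ge0 X. Qed.

Lemma Rintegral_qbid_pay : Rintegral mu setT (pay (qbid pi (qf mu)) X)
  = \sum_(j < K.+1 | (0 < j)%N) \sum_(l < K.+1 | (j <= l)%N)
      pi l * (X j - X (inord j.-1)) * qf mu (Pi pi j).
Proof.
rewrite (Rintegral_pay mu01 qbid_ge_qf qf_Pi_ge0); apply: eq_bigr => j _.
rewrite prob_gt_qf ?Pi_ge0 ?(Pi_le1 pi_ge0 pi_sum1) // (subr1_Pi pi_sum1).
by rewrite mulrC !big_distrl /=; apply: eq_bigr => l _; rewrite mulrA.
Qed.

End quantile_payment.

Section bid_profiles.
Context (R : realType) (n K : nat) (D : 'I_n -> probability R R)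
  (s : 'I_n -> R -> 'I_K.+1).
Hypothesis measurable_s : forall k (b : 'I_K.+1), measurable [set z | s k z == b].

Definition upd_bid (b : {ffun 'I_n -> 'I_K.+1}) (i : 'I_n) (j : 'I_K.+1) :
  {ffun 'I_n -> 'I_K.+1} := [ffun l => if l == i then j else b l].

Lemma bprofile_iE v i j :
  bprofile_i s v i j = upd_bid (upd_bid (bprofile s v) i ord0) i j.
Proof. by apply/ffunP => l; rewrite !ffunE; case: eqP. Qed.

Lemma bprofile_updv v i z :
  bprofile s (updv v i z) = upd_bid (upd_bid (bprofile s v) i ord0) i (s i z).
Proof. by apply/ffunP => l; rewrite !ffunE /updv; case: eqP => // ->. Qed.

Lemma ptildeE (x : {ffun 'I_n -> 'I_K.+1} -> 'I_n -> R) v i :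
  ptilde x s v i
  = pay (s i) (fun j => x (upd_bid (upd_bid (bprofile s v) i ord0) i j) i) (v i).
Proof.
rewrite /ptilde /xtilde /pay -bprofile_updv /updv.
have -> : (fun l => if l == i then v i else v l) = v by apply: funext => l; case: eqP => // ->.
by congr (_ - Rintegral _ _ _); apply: funext => z; rewrite bprofile_updv.
Qed.

(* The indicators [s_k(v_k) = b_k], k <> i, select the actual bids of the others
   among all profiles b; coordinate i of b is pinned to ord0 so that each b_{-i}
   is counted once. *)
Lemma sum_bid_profile_prod i (h : {ffun 'I_n -> 'I_K.+1} -> R -> R) v :
  \sum_(b : {ffun 'I_n -> 'I_K.+1}) \prod_(k < n)
     (if k == i then (b i == ord0)%:R * h b (v k) else (s k (v k) == b k)%:R)
  = h (upd_bid (bprofile s v) i ord0) (v i).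
Proof.
set b0 := upd_bid (bprofile s v) i ord0.
rewrite (bigD1 b0) //= [X in _ + X]big1 ?addr0.
  rewrite (bigD1 i) //= eqxx /b0 ffunE !eqxx mul1r big1 ?mulr1 //.
  by move=> k ki; rewrite (negbTE ki) ffunE (negbTE ki) ffunE eqxx.
move=> b bb0; have [k bk] : exists k, b k != b0 k.
  apply/existsP; apply: contraNT bb0 => /existsPn bb0.
  by apply/eqP/ffunP => k; apply/eqP; rewrite -[_ == _]negbK bb0.
rewrite (bigD1 k) //=; case: (eqVneq k i) => [ki|ki].
  by move: bk; rewrite ki /b0 ffunE eqxx => /negbTE ->; rewrite !mul0r.
by move: bk; rewrite /b0 ffunE (negbTE ki) ffunE eq_sym => /negbTE ->; rewrite mul0r.
Qed.

Definition partial_integral (S : pred 'I_n) (w : 'I_n -> R) (k : 'I_n) (g : R -> R) :=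
  if S k then Rintegral (D k) setT g else g (w k).

Lemma iterE_bid_profile (P S : pred 'I_n)
    (h : 'I_n -> {ffun 'I_n -> 'I_K.+1} -> R -> R) (w : 'I_n -> R) :
  (forall i b, S i -> (D i).-integrable setT (EFin \o h i b)) ->
  iterE D S n (fun v => (\sum_(i | P i) h i (upd_bid (bprofile s v) i ord0) (v i))%:E) w
  = (\sum_(i | P i) \sum_(b : {ffun 'I_n -> 'I_K.+1}) \prod_(k < n)
       (if k == i then (b i == ord0)%:R * partial_integral S w i (h i b)
        else partial_integral S w k (fun z => (s k z == b k)%:R)))%:E.
Proof.
move=> h_int.
pose phi (ib : 'I_n * {ffun 'I_n -> 'I_K.+1}) k z :=
  if k == ib.1 then (ib.2 ib.1 == ord0)%:R * h ib.1 ib.2 z else (s k z == ib.2 k)%:R.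
have phi_int ib k : S k -> (D k).-integrable setT (EFin \o phi ib k).
  rewrite /phi; case: eqP => [-> Si|_ _]; first exact/integrableZl_EFin/h_int.
  apply: (integrable_bool_indic (P := fun z => s k z == ib.2 k)) => //.
  by rewrite ltey_eq fin_num_measure.
rewrite (_ : (fun v => _) = fun v => (\sum_(ib | P ib.1 && xpredT ib.2)
                                        \prod_(k < n) phi ib k (v k))%:E); last first.
  apply: funext => v; rewrite -(pair_big P xpredT (fun i b => \prod_k phi (i, b) k (v k))).
  by congr EFin; apply: eq_bigr => i _; rewrite -sum_bid_profile_prod.
rewrite iterE_sum_prod // [in RHS]pair_big /=.
congr EFin; apply: eq_bigr => -[i b] _; apply: eq_bigr => k _.
rewrite ltn_ord /phi /partial_integral /=; case: (eqVneq k i) => [->|] //.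
by case Si: (S i); rewrite ?RintegralZl //; exact: h_int.
Qed.

End bid_profiles.

Theorem mainTheorem7 (R : realType) (n K : nat) (HK : (0 < K)%N)
  (D : 'I_n -> probability R R)
  (HD01 : forall i, D i `[0, 1]%classic = 1%E)
  (HDc : forall i, continuous (cdfF (D i)))
  (x : {ffun 'I_n -> 'I_K.+1} -> 'I_n -> R)
  (p : {ffun 'I_n -> 'I_K.+1} -> 'I_n -> R)
  (Hx0 : forall b i, 0 <= x b i)
  (Hx1 : forall b, \sum_(i < n) x b i <= 1)
  (Hp : forall b i, 0 <= p b i <= 1)
  (pi : 'I_n -> 'I_K.+1 -> R)
  (Hpi0 : forall i l, 0 <= pi i l)
  (Hpi1 : forall i, \sum_(l < K.+1) pi i l = 1) :
  let s := fun i => qbid (pi i) (qf (D i)) in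
  Eprod D (fun v => (\sum_(i < n) ptilde x s v i)%:E)
  = (\sum_(i < n)
       Eminus D i (fun v =>
         (\sum_(j < K.+1 | (0 < j)%N)
            \sum_(l < K.+1 | (j <= l)%N)
              pi i l
              * (x (bprofile_i s v i j) i - x (bprofile_i s v i (inord j.-1)) i)
              * qf (D i) (Pi (pi i) j))%:E))%E.
Proof.
move=> s.
have measurable_s k := measurable_qbid_eq (HD01 k) (Hpi0 k) (Hpi1 k).
pose X i b (j : 'I_K.+1) := x (upd_bid b i j) i.
pose G i b := \sum_(j < K.+1 | (0 < j)%N) \sum_(l < K.+1 | (j <= l)%N)
  pi i l * (X i b j - X i b (inord j.-1)) * qf (D i) (Pi (pi i) j).
(* The E_{v_{-i}} integrand is a one-term sum over bidders, the shape of iterE_bid_profile. *)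
rewrite /Eprod (eq_bigr (fun i => iterE D (predC1 i) n (fun v =>
  (\sum_(j | j == i) G j (upd_bid (bprofile s v) j ord0))%:E) (fun=> 0%R))%E); last first.
  move=> i _; rewrite /Eminus; congr iterE; apply: funext => v.
  by rewrite big_pred1_eq /G /X; under eq_bigr do under eq_bigr do rewrite !bprofile_iE.
under eq_fun do under eq_bigr do rewrite ptildeE.
rewrite (@iterE_bid_profile _ _ _ _ _ measurable_s _ _ (fun i b => pay (s i) (X i b))); last first.
  by move=> i b _; exact: integrable_qbid_pay (HD01 i) (Hpi0 i) (Hpi1 i) _.
under eq_bigr => i _.
  rewrite (@iterE_bid_profile _ _ _ _ _ measurable_s _ _ (fun j b _ => G j b)); last first.
    by move=> j b _; exact: finite_measure_integrable_cst.
  rewrite big_pred1_eq.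
  over.
rewrite sumEFin; congr EFin; apply: eq_bigr => i _; apply: eq_bigr => b _.
apply: eq_bigr => k _; rewrite /partial_integral.
case: eqP => [<-|/eqP ki] /=; last by rewrite ki.
by rewrite eqxx (Rintegral_qbid_pay (HD01 k) (HDc k) (Hpi0 k) (Hpi1 k)).
Qed.
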